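(* Let $K\in\mathbb{N}$, let $\mu$ be a positive even integer, let $h>0$, and let $\alpha<\beta\le\gamma<\delta$ be real numbers with $\beta-\alpha=\delta-\gamma=h$. Let $$\xi^1_\kappa=\alpha+\frac{\beta-\alpha}{K+1}\kappa,\qquad \xi^2_\kappa=\gamma+\frac{\delta-\gamma}{K+1}\kappa,\qquad \kappa=1,\dots,K,$$ and for $i=1,2$ set $$B_{\mu,i}(x)=\frac{\prod_{\kappa=1}^K|x-\xi^i_\kappa|^{-\mu}}{\prod_{\kappa=1}^K|x-\xi^1_\kappa|^{-\mu}+\prod_{\kappa=1}^K|x-\xi^2_\kappa|^{-\mu}}.$$ For $t\ge 0$ and $k\in\{1,\dots,K-1\}$ define $$F_\mu(t,h,k,K)=\left(\frac{k!\,(K-k)!}{\prod_{\kappa=1}^K(K-k+\kappa)+(K+1)^K\left(\frac{t}{h}\right)^K}\right)^{\mu}.$$ Then for every $k=1,\dots,K-1$ and every $x\in(\xi^1_k,\xi^1_{k+1})$, $$B_{\mu,2}(x)\le F_\mu(\gamma-\beta,h,k,K),$$ and for every $k=1,\dots,K-1$ and every $x\in(\xi^2_k,\xi^2_{k+1})$, $$B_{\mu,1}(x)\le \left(\frac{k!\,(K-k)!}{\prod_{\kappa=1}^K(k+\kappa)+(K+1)^K\left(\frac{\gamma-\beta}{h}\right)^K}\right)^{\mu}=F_\mu(\gamma-\beta,h,K-k,K).$$ *)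

From mathcomp Require Import all_boot all_order all_algebra.
Set Implicit Arguments. Unset Strict Implicit. Unset Printing Implicit Defensive.
Import Order.TTheory GRing.Theory Num.Theory.
Local Open Scope ring_scope.

Definition xi (R : realFieldType) (a b : R) (K kappa : nat) : R :=
  a + (b - a) / (K.+1)%:R * kappa%:R.

Definition Pnode (R : realFieldType) (mu K : nat) (a b x : R) : R :=
  \prod_(1 <= kappa < K.+1) (`|x - xi a b K kappa| ^+ mu)^-1.

Definition Bmu (R : realFieldType) (mu K : nat) (alpha beta gamma delta : R)
  (i : nat) (x : R) : R :=
  (if i == 1%N then Pnode mu K alpha beta x else Pnode mu K gamma delta x) /
  (Pnode mu K alpha beta x + Pnode mu K gamma delta x).

Definition Fmu (R : realFieldType) (mu : nat) (t h : R) (k K : nat) : R :=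
  ((k`! * (K - k)`!)%:R /
   ((\prod_(1 <= kappa < K.+1) (K - k + kappa)%N%:R) + (K.+1)%:R ^+ K * (t / h) ^+ K))
  ^+ mu.

From mathcomp Require Import all_boot all_order all_algebra.
From mathcomp Require Import lra zify ring.
Set Implicit Arguments. Unset Strict Implicit. Unset Printing Implicit Defensive.
Import Order.TTheory GRing.Theory Num.Theory.

(* Let s = h/(K+1) be the node spacing and t = gamma - beta the gap between the
   two blocks.  A point of the cell (xi_k, xi_(k+1)) of its own block is within
   s (k+1-i), resp. s (i-k), of its i-th node, so the product of the distances
   to the near nodes is at most s^K k! (K-k)!.  The distances to the far nodes
   are at least t + s c_i with c_i = K-k+i (resp. k+K+1-i), and expanding
   prod (t + s c_i) >= s^K prod c_i + t^K bounds their product from below.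
   Since the far weight is at most (near product / far product)^mu, dividing
   numerator and denominator by s^K gives F_mu. *)

(* The largest distance, in units of the spacing, from node i to the cell (k, k+1). *)
Definition node_gap (k i : nat) : nat := if (i <= k)%N then k.+1 - i else i - k.

Lemma prod_node_gap (k K : nat) : (k <= K)%N ->
  \prod_(1 <= i < K.+1) node_gap k i = (k`! * (K - k)`!)%N.
Proof.
move=> le_kK; rewrite (@big_cat_nat _ _ _ k.+1) //=; congr (_ * _)%N.
  rewrite fact_prod big_nat_rev /=.
  by apply: eq_big_nat => i /andP[i_gt0 i_le]; rewrite /node_gap ifT; lia.
rewrite fact_prod -{1}[k.+1]add1n big_addn -subSn //.
by apply: eq_big_nat => i /andP[i_gt0 i_le]; rewrite /node_gap ifF; lia.
Qed.

Local Open Scope ring_scope.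

Lemma prod_addr_ge (R : realDomainType) (t : R) (a : nat -> R) (n : nat) :
  (0 < n)%N -> 0 <= t -> (forall i, 0 <= a i) ->
  \prod_(1 <= i < n.+1) a i + t ^+ n <= \prod_(1 <= i < n.+1) (t + a i).
Proof.
move=> + t_ge0 a_ge0; elim: n => [//|[|n] IHn] _.
  by rewrite !big_nat1 expr1 addrC.
rewrite big_nat_recr //= [X in _ <= X]big_nat_recr //= exprS.
set C := \prod_(1 <= i < n.+2) a i.
have C_ge0 : 0 <= C by apply: prodr_ge0.
have tn_ge0 : 0 <= t ^+ n.+1 by apply: exprn_ge0.
have a_n := a_ge0 n.+2.
apply: (@le_trans _ _ ((C + t ^+ n.+1) * (t + a n.+2))); last first.
  by apply: ler_wpM2r; [apply: addr_ge0 | apply: IHn].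
have Ct_ge0 : 0 <= C * t by apply: mulr_ge0.
have tna_ge0 : 0 <= t ^+ n.+1 * a n.+2 by apply: mulr_ge0.
rewrite mulrDl !mulrDr (mulrC t); lra.
Qed.

Section CellDistances.

Variables (R : realFieldType) (a s x : R) (k : nat).
Hypotheses (s_gt0 : 0 < s) (x_in_cell : a + s * k%:R < x < a + s * k.+1%:R).

Lemma dist_node_gt0 (i : nat) : 0 < `|x - (a + s * i%:R)|.
Proof.
case/andP: x_in_cell => lt_kx lt_xk1; rewrite normr_gt0 subr_eq0.
have [le_ik | lt_ki] := leqP i k.
  have : s * i%:R <= s * k%:R by rewrite ler_pM2l // ler_nat.
  by move=> ?; apply/eqP; lra.
have : s * k.+1%:R <= s * i%:R by rewrite ler_pM2l // ler_nat.
by move=> ?; apply/eqP; lra.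
Qed.

Lemma dist_node_le_gap (i : nat) : `|x - (a + s * i%:R)| <= s * (node_gap k i)%:R.
Proof.
case/andP: x_in_cell => lt_kx lt_xk1; rewrite /node_gap.
have [le_ik | lt_ki] := leqP i k.
  have : s * i%:R <= s * k%:R by rewrite ler_pM2l // ler_nat.
  move=> ?; rewrite natrB ?(leqW le_ik) // gtr0_norm; lra.
have : s * k.+1%:R <= s * i%:R by rewrite ler_pM2l // ler_nat.
rewrite natrB 1?ltnW // -natr1 mulrDr mulr1 in lt_xk1 * => ?.
rewrite ltr0_norm; lra.
Qed.

Lemma prod_dist_nodes_le (K : nat) : (k <= K)%N ->
  \prod_(1 <= i < K.+1) `|x - (a + s * i%:R)| <= s ^+ K * (k`! * (K - k)`!)%:R.
Proof.
move=> le_kK; rewrite -prod_node_gap // natr_prod.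
rewrite -[K in s ^+ K](subn1 K.+1) -prodr_const_nat -big_split /=.
apply: ler_prod => i _; rewrite dist_node_le_gap andbT; exact: ltW (dist_node_gt0 i).
Qed.

Lemma prod_dist_nodes_gt0 (K : nat) : 0 < \prod_(1 <= i < K.+1) `|x - (a + s * i%:R)|.
Proof. by apply: prodr_gt0 => i _; apply: dist_node_gt0. Qed.

End CellDistances.

Section FarBlocks.

Variables (R : realFieldType) (a b s t x : R) (K k : nat).
Hypothesis b_eq : b = a + s * K.+1%:R + t.

Lemma dist_right_block_ge (i : nat) : (k <= K)%N -> x < a + s * k.+1%:R ->
  t + s * (K - k + i)%:R <= `|x - (b + s * i%:R)|.
Proof.
move=> le_kK lt_xk1; rewrite distrC; apply: le_trans (ler_norm _) => /=.
rewrite b_eq natrD natrB // -!natr1 !(mulrDr, mulrBr) mulr1 in lt_xk1 *; lra.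
Qed.

Lemma dist_left_block_ge (i : nat) : (i <= K.+1)%N -> b + s * k%:R < x ->
  t + s * (k + K.+1 - i)%:R <= `|x - (a + s * i%:R)|.
Proof.
move=> le_iK1 lt_kx; apply: le_trans (ler_norm _).
rewrite b_eq in lt_kx; rewrite natrB; last exact: leq_trans le_iK1 (leq_addl _ _).
rewrite natrD !(mulrDr, mulrBr); lra.
Qed.

End FarBlocks.

Lemma weight_le_ratioX (R : realFieldType) (mu : nat) (A1 A2 : R) :
  0 < A1 -> 0 < A2 ->
  (A2 ^+ mu)^-1 / ((A1 ^+ mu)^-1 + (A2 ^+ mu)^-1) <= (A1 / A2) ^+ mu.
Proof.
move=> A1_gt0 A2_gt0.
have iA1_gt0 : 0 < (A1 ^+ mu)^-1 by rewrite invr_gt0 exprn_gt0.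
have iA2_gt0 : 0 < (A2 ^+ mu)^-1 by rewrite invr_gt0 exprn_gt0.
have -> : (A1 / A2) ^+ mu = (A2 ^+ mu)^-1 / (A1 ^+ mu)^-1.
  by rewrite invrK mulrC exprMn exprVn.
by rewrite ler_pM2l // lef_pV2 ?posrE ?addr_gt0 // lerDl ltW.
Qed.

Lemma ratio_spacing_scale (R : realFieldType) (K : nat) (h t N P : R) : 0 < h ->
  let s := h / K.+1%:R in
  s ^+ K * N / (s ^+ K * P + t ^+ K) = N / (P + K.+1%:R ^+ K * (t / h) ^+ K).
Proof.
move=> h_gt0 s.
have s_neq0 : s != 0 by rewrite mulf_neq0 ?invr_eq0 ?pnatr_eq0 // gt_eqF.
have -> : t ^+ K = s ^+ K * (K.+1%:R ^+ K * (t / h) ^+ K).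
  rewrite -!exprMn /s; congr (_ ^+ _); field.
  by rewrite gt_eqF //= addrC natr1 pnatr_eq0.
by rewrite -mulrDr invfM mulrACA mulfV ?mul1r // expf_neq0.
Qed.

Lemma prod_ge_spacing_powD (R : realFieldType) (K : nat) (s t : R)
    (c : nat -> nat) (F : nat -> R) :
  (0 < K)%N -> 0 <= s -> 0 <= t ->
  (forall i, (1 <= i <= K)%N -> t + s * (c i)%:R <= F i) ->
  s ^+ K * \prod_(1 <= i < K.+1) (c i)%:R + t ^+ K <= \prod_(1 <= i < K.+1) F i.
Proof.
move=> K_gt0 s_ge0 t_ge0 le_F.
rewrite -[K in s ^+ K](subn1 K.+1) -prodr_const_nat -big_split /=.
apply: le_trans (prod_addr_ge K_gt0 t_ge0 _) _ => [i|]; first exact: mulr_ge0.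
rewrite big_nat [X in _ <= X]big_nat; apply: ler_prod => i /andP[i_gt0 i_le].
by rewrite le_F ?i_gt0 // andbT addr_ge0 ?mulr_ge0.
Qed.

Lemma far_weight_le (R : realFieldType) (mu K : nat) (h t N A : R)
    (c : nat -> nat) (F : nat -> R) :
  (0 < K)%N -> 0 < h -> 0 <= t -> (forall i, (1 <= i <= K)%N -> 0 < c i)%N ->
  let s := h / K.+1%:R in
  0 < A -> A <= s ^+ K * N ->
  (forall i, (1 <= i <= K)%N -> t + s * (c i)%:R <= F i) ->
  ((\prod_(1 <= i < K.+1) F i) ^+ mu)^-1 /
    ((A ^+ mu)^-1 + ((\prod_(1 <= i < K.+1) F i) ^+ mu)^-1)
    <= (N / (\prod_(1 <= i < K.+1) (c i)%:R + K.+1%:R ^+ K * (t / h) ^+ K)) ^+ mu.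
Proof.
move=> K_gt0 h_gt0 t_ge0 c_gt0 s A_gt0 le_A le_F.
set B := \prod_(1 <= i < K.+1) F i.
have s_gt0 : 0 < s by rewrite divr_gt0 ?ltr0n.
set C := \prod_(1 <= i < K.+1) (c i)%:R.
have C_gt0 : 0 < C by rewrite /C big_nat prodr_gt0 // => i /c_gt0; rewrite ltr0n.
pose D := s ^+ K * C + t ^+ K.
have D_gt0 : 0 < D by rewrite ltr_wpDr ?exprn_ge0 ?mulr_gt0 ?exprn_gt0.
have le_DB : D <= B := prod_ge_spacing_powD K_gt0 (ltW s_gt0) t_ge0 le_F.
have B_gt0 := lt_le_trans D_gt0 le_DB.
apply: le_trans (weight_le_ratioX mu A_gt0 B_gt0) _.
rewrite -ratio_spacing_scale // -/s -/C -/D.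
have A_ge0 := ltW A_gt0.
apply: lerXn2r; rewrite ?nnegrE.
- by rewrite divr_ge0 ?ltW.
- by rewrite divr_ge0 ?(le_trans A_ge0 le_A) ?ltW.
- by apply: ler_pM; rewrite ?invr_ge0 ?lef_pV2 ?posrE // ltW.
Qed.

Lemma PnodeE (R : realFieldType) (mu K : nat) (a b x : R) :
  Pnode mu K a b x = ((\prod_(1 <= i < K.+1) `|x - xi a b K i|) ^+ mu)^-1.
Proof. by rewrite /Pnode prodfV prodrXl. Qed.

Theorem lemma1 (R : realFieldType) (K mu : nat) (h alpha beta gamma delta : R) :
  (0 < mu)%N -> ~~ odd mu -> 0 < h ->
  alpha < beta -> beta <= gamma -> gamma < delta ->
  beta - alpha = h -> delta - gamma = h ->
  (forall k : nat, (1 <= k <= K - 1)%N -> forall x : R,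
     xi alpha beta K k < x < xi alpha beta K k.+1 ->
     Bmu mu K alpha beta gamma delta 2 x <= Fmu mu (gamma - beta) h k K)
  /\
  (forall k : nat, (1 <= k <= K - 1)%N -> forall x : R,
     xi gamma delta K k < x < xi gamma delta K k.+1 ->
     Bmu mu K alpha beta gamma delta 1 x <=
       ((k`! * (K - k)`!)%:R /
        ((\prod_(1 <= kappa < K.+1) (k + kappa)%N%:R)
         + (K.+1)%:R ^+ K * ((gamma - beta) / h) ^+ K)) ^+ mu
     /\
     ((k`! * (K - k)`!)%:R /
        ((\prod_(1 <= kappa < K.+1) (k + kappa)%N%:R)
         + (K.+1)%:R ^+ K * ((gamma - beta) / h) ^+ K)) ^+ mu
       = Fmu mu (gamma - beta) h (K - k) K).
Proof.
move=> _ _ h_gt0 _ le_bg _ beta_eq delta_eq.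
set s := h / K.+1%:R; set t := gamma - beta.
have s_gt0 : 0 < s by rewrite divr_gt0 ?ltr0n.
have t_ge0 : 0 <= t by rewrite subr_ge0.
have gamma_eq : gamma = alpha + s * K.+1%:R + t.
  by rewrite /t /s mulfVK ?pnatr_eq0 //; lra.
split=> k /andP[k_ge1 k_le] x.
all: rewrite /Bmu /= !PnodeE /xi beta_eq delta_eq -/s => x_in_cell.
all: have [le_kK K_gt0] : (k <= K)%N /\ (0 < K)%N by lia.
- apply: far_weight_le => // [i|||i i_range]; first lia.
  + exact: prod_dist_nodes_gt0 s_gt0 x_in_cell K.
  + exact: prod_dist_nodes_le s_gt0 x_in_cell K le_kK.
  + by apply: dist_right_block_ge gamma_eq _ _ (proj2 (andP x_in_cell)).
- split; last by rewrite /Fmu subKn // mulnC.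
  have -> : \prod_(1 <= i < K.+1) (k + i)%:R = \prod_(1 <= i < K.+1) (k + K.+1 - i)%:R :> R.
    by rewrite big_nat_rev; apply: eq_big_nat => i /andP[i_ge1 i_le]; congr _%:R; lia.
  rewrite addrC; apply: far_weight_le => // [i i_range|||i /andP[_ i_le]]; first lia.
  + exact: prod_dist_nodes_gt0 s_gt0 x_in_cell K.
  + exact: prod_dist_nodes_le s_gt0 x_in_cell K le_kK.
  + by apply: dist_left_block_ge gamma_eq _ _ (proj1 (andP x_in_cell)); rewrite ltnW.
Qed.
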